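(* Let $\alpha,\beta,\gamma\in\mathbb{Z}[i]$ satisfy $\alpha^2+i\beta^2+(1+i)\gamma^2=0$, $\alpha\beta\gamma\neq0$, $\gcd(\alpha,\beta)\in U$. Then there are units $\varepsilon_1,\varepsilon_2,\varepsilon_3\in U$ such that $(X,Y,Z)=(\varepsilon_1\alpha,\varepsilon_2\beta,\varepsilon_3\gamma)$ satisfies $X^2+iY^2=(1+i)Z^2$ with $X,Y,Z\in O^I$, $\gcd(X,Y)\in U$, $XYZ\neq0$. Conversely, if $(X,Y,Z)$ satisfies $X^2+iY^2=(1+i)Z^2$, $\gcd(X,Y)\in U$, $XYZ\ne0$, then $(X,Y,iZ)$ is a solution of $X^2+iY^2+(1+i)Z^2=0$ with the same conditions.
   Context: $\mathbb{Z}[i]$ is the ring of Gaussian integers, $U=\{1,-1,i,-i\}$ its unit group; $R(\alpha),I(\alpha)$ are real and imaginary parts. $\gcd(x,y)\in U$ means no common non-unit divisor. $O=\{\alpha: R(\alpha)+I(\alpha)\equiv1\pmod 2\}$, $O^I=\{\alpha\in O: R(\alpha)\equiv 1\pmod 4\}$. *)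

(* Gaussian integers Z[i] modelled as pairs (real part, imaginary part) of integers. *)
From Stdlib Require Import ZArith.
Open Scope Z_scope.

Record gint := GI { R : Z; I : Z }.

Definition gadd (x y : gint) : gint := GI (R x + R y) (I x + I y).
Definition gmul (x y : gint) : gint :=
  GI (R x * R y - I x * I y) (R x * I y + I x * R y).
Definition g0 : gint := GI 0 0.
Definition g1 : gint := GI 1 0.
Definition gi : gint := GI 0 1.
Definition g1pi : gint := GI 1 1.
Definition gsq (x : gint) : gint := gmul x x.

Definition inU (u : gint) : Prop :=
  u = GI 1 0 \/ u = GI (-1) 0 \/ u = GI 0 1 \/ u = GI 0 (-1).

Definition gdvd (d x : gint) : Prop := exists q : gint, x = gmul d q.

Definition gcd_in_U (x y : gint) : Prop :=
  forall d : gint, gdvd d x -> gdvd d y -> inU d.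

Definition inO (a : gint) : Prop := (R a + I a) mod 2 = 1.
Definition inOI (a : gint) : Prop := inO a /\ R a mod 4 = 1.

From Pilot Require Import Defs.
From Stdlib Require Import ZArith Lia.
Open Scope Z_scope.

(* Squares of elements of O are congruent to +1 or -1 modulo 4 (+1 exactly when the
   real part is odd), while squares of non-elements of O are divisible by 2.  Reading
   the equation modulo 2 and 4 therefore forces alpha, beta, gamma into O, with the
   squares of alpha and beta congruent to the same sign s and that of gamma to -s.
   A unit e normalising x into O^I satisfies e^2 = s for the sign s of x, so
   multiplying by the normalising units turns the equation into
   s (alpha^2 + i beta^2) = -s (1+i) gamma^2. *)

Definition gopp (x : gint) : gint := GI (- R x) (- I x).
Definition gsub (x y : gint) : gint := gadd x (gopp y).

Lemma gint_ring_theory : ring_theory g0 g1 gadd gmul gsub gopp (@eq gint).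
Proof.
  split; intros;
    repeat match goal with x : gint |- _ => destruct x as [?a ?b] end;
    unfold gsub, gopp, gadd, gmul, g0, g1; cbn [Defs.R Defs.I]; f_equal; ring.
Qed.

Add Ring gint_ring : gint_ring_theory.

Lemma gi_sq : gmul gi gi = gopp g1.
Proof. reflexivity. Qed.

Lemma gsq_mul x y : gsq (gmul x y) = gmul (gsq x) (gsq y).
Proof. unfold gsq; ring. Qed.

Lemma gadd_eq0 x y : gadd x y = g0 -> x = gopp y.
Proof. intro H. transitivity (gsub (gadd x y) y); [ring | rewrite H; ring]. Qed.

Lemma unit_cancel u : inU u -> exists v, forall x, gmul v (gmul u x) = x.
Proof.
  intro Hu.
  assert (Hinv : exists v, gmul v u = g1).
  { destruct Hu as [->|[->|[->| ->]]];
      [exists g1 | exists (GI (-1) 0) | exists (GI 0 (-1)) | exists gi]; reflexivity. }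
  destruct Hinv as [v Hv]. exists v. intro x.
  transitivity (gmul (gmul v u) x); [ring | rewrite Hv; ring].
Qed.

Lemma unit_mul_neq0 u z : inU u -> z <> g0 -> gmul u z <> g0.
Proof.
  intros Hu Hz E. destruct (unit_cancel u Hu) as [v Hv].
  apply Hz. rewrite <- (Hv z), E. ring.
Qed.

Lemma gdvd_mull d u x : gdvd d x -> gdvd d (gmul u x).
Proof. intros [q ->]. exists (gmul u q). ring. Qed.

Lemma gcd_in_U_units u v x y :
  inU u -> inU v -> gcd_in_U x y -> gcd_in_U (gmul u x) (gmul v y).
Proof.
  intros Hu Hv G d Dx Dy.
  destruct (unit_cancel u Hu) as [u' Hu'], (unit_cancel v Hv) as [v' Hv'].
  apply G; [rewrite <- (Hu' x) | rewrite <- (Hv' y)]; apply gdvd_mull; assumption.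
Qed.

Lemma inO_dec x : inO x \/ ~ inO x.
Proof. unfold inO. destruct (Z.eq_dec ((R x + I x) mod 2) 1); tauto. Qed.

Lemma g1pi_dvd_not_inO x : ~ inO x -> gdvd g1pi x.
Proof.
  destruct x as [a b]; unfold inO; cbn [Defs.R Defs.I]; intro Hx.
  exists (GI ((a + b) / 2) ((b - a) / 2)).
  unfold gmul, g1pi; cbn [Defs.R Defs.I]; f_equal; Z.to_euclidean_division_equations; lia.
Qed.

Lemma inO_or_of_gcd x y : gcd_in_U x y -> inO x \/ inO y.
Proof.
  intro G. destruct (inO_dec x) as [|Hx]; [now left|].
  destruct (inO_dec y) as [|Hy]; [now right|].
  destruct (G g1pi (g1pi_dvd_not_inO x Hx) (g1pi_dvd_not_inO y Hy))
    as [E|[E|[E|E]]]; discriminate E.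
Qed.

Definition sq_sign (x : gint) : Z := if Z.odd (R x) then 1 else -1.

Lemma sq_sign_cases x : sq_sign x = 1 \/ sq_sign x = -1.
Proof. unfold sq_sign. destruct (Z.odd (R x)); auto. Qed.

Lemma gsq_not_inO x : ~ inO x -> exists k l, gsq x = GI (2 * k) (2 * l).
Proof.
  intro Hx. destruct (g1pi_dvd_not_inO x Hx) as [[a b] ->].
  exists (- (2 * a * b)), (a * a - b * b).
  unfold gsq, gmul, g1pi; cbn [Defs.R Defs.I]; f_equal; ring.
Qed.

Lemma gsq_inO x : inO x -> exists k l, gsq x = GI (sq_sign x + 4 * k) (4 * l).
Proof.
  destruct x as [a b]; unfold inO, sq_sign, gsq, gmul; cbn [Defs.R Defs.I]; intro Hx.
  destruct (Z.odd a) eqn:Ha.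
  - apply Z.odd_spec in Ha as [p ->].
    assert (Hb : b = 2 * (b / 2)) by (Z.to_euclidean_division_equations; lia).
    set (q := b / 2) in Hb; rewrite Hb.
    exists (p * p + p - q * q), ((2 * p + 1) * q); f_equal; ring.
  - rewrite <- Z.negb_even, Bool.negb_false_iff in Ha.
    apply Z.even_spec in Ha as [p ->].
    assert (Hb : b = 2 * (b / 2) + 1) by (Z.to_euclidean_division_equations; lia).
    set (q := b / 2) in Hb; rewrite Hb.
    exists (p * p - q * q - q), (p * (2 * q + 1)); f_equal; ring.
Qed.

Lemma normalize_unit x :
  inO x -> exists e, inU e /\ gsq e = GI (sq_sign x) 0 /\ inOI (gmul e x).
Proof.
  destruct x as [a b]; unfold inOI, inO, inU, sq_sign, gsq, gmul; cbn [Defs.R Defs.I].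
  intro Hx. destruct (Z.odd a) eqn:Ha.
  - apply Z.odd_spec in Ha as [p ->].
    destruct (Z.eq_dec ((2 * p + 1) mod 4) 1);
      [exists (GI 1 0) | exists (GI (-1) 0)]; cbn [Defs.R Defs.I];
      repeat split; auto; Z.to_euclidean_division_equations; lia.
  - rewrite <- Z.negb_even, Bool.negb_false_iff in Ha.
    apply Z.even_spec in Ha as [p ->].
    destruct (Z.eq_dec ((- b) mod 4) 1);
      [exists (GI 0 1) | exists (GI 0 (-1))]; cbn [Defs.R Defs.I];
      repeat split; auto; Z.to_euclidean_division_equations; lia.
Qed.

Lemma equation_components A B C :
  gadd (gadd A (gmul gi B)) (gmul g1pi C) = g0 ->
  R A - I B + R C - I C = 0 /\ I A + R B + R C + I C = 0.
Proof.
  intro H; unfold gadd, gmul, gi, g1pi, g0 in H.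
  split; [apply (f_equal R) in H | apply (f_equal I) in H]; cbn [Defs.R Defs.I] in H; lia.
Qed.

Section Solution.

Variables alpha beta gamma : gint.
Hypothesis Heq :
  gadd (gadd (gsq alpha) (gmul gi (gsq beta))) (gmul g1pi (gsq gamma)) = g0.

Lemma solution_inO_iff : inO alpha <-> inO beta.
Proof.
  pose proof (sq_sign_cases alpha); pose proof (sq_sign_cases beta).
  destruct (equation_components _ _ _ Heq) as [Re Im].
  split; intro Ho.
  - destruct (inO_dec beta) as [|Hn]; [assumption | exfalso].
    destruct (gsq_inO _ Ho) as (k1 & l1 & E1), (gsq_not_inO _ Hn) as (k2 & l2 & E2).
    rewrite E1, E2 in *; cbn [Defs.R Defs.I] in *; lia.
  - destruct (inO_dec alpha) as [|Hn]; [assumption | exfalso].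
    destruct (gsq_not_inO _ Hn) as (k1 & l1 & E1), (gsq_inO _ Ho) as (k2 & l2 & E2).
    rewrite E1, E2 in *; cbn [Defs.R Defs.I] in *; lia.
Qed.

Hypothesis HoA : inO alpha.
Hypothesis HoB : inO beta.

Lemma solution_inO_gamma : inO gamma.
Proof.
  destruct (inO_dec gamma) as [|Hn]; [assumption | exfalso].
  pose proof (sq_sign_cases alpha).
  destruct (equation_components _ _ _ Heq) as [Re _].
  destruct (gsq_inO _ HoA) as (k1 & l1 & E1), (gsq_inO _ HoB) as (k2 & l2 & E2),
    (gsq_not_inO _ Hn) as (k3 & l3 & E3).
  rewrite E1, E2, E3 in *; cbn [Defs.R Defs.I] in *; lia.
Qed.

Lemma solution_sq_signs :
  sq_sign beta = sq_sign alpha /\ sq_sign gamma = - sq_sign alpha.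
Proof.
  pose proof (sq_sign_cases alpha); pose proof (sq_sign_cases beta);
    pose proof (sq_sign_cases gamma).
  destruct (equation_components _ _ _ Heq) as [Re Im].
  destruct (gsq_inO _ HoA) as (k1 & l1 & E1), (gsq_inO _ HoB) as (k2 & l2 & E2),
    (gsq_inO _ solution_inO_gamma) as (k3 & l3 & E3).
  rewrite E1, E2, E3 in *; cbn [Defs.R Defs.I] in *; lia.
Qed.

End Solution.

Lemma unit_twisted_solution alpha beta gamma e1 e2 e3 s :
  gadd (gadd (gsq alpha) (gmul gi (gsq beta))) (gmul g1pi (gsq gamma)) = g0 ->
  gsq e1 = GI s 0 -> gsq e2 = GI s 0 -> gsq e3 = GI (- s) 0 ->
  gadd (gsq (gmul e1 alpha)) (gmul gi (gsq (gmul e2 beta)))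
  = gmul g1pi (gsq (gmul e3 gamma)).
Proof.
  intros H E1 E2 E3.
  apply gadd_eq0 in H.
  rewrite !gsq_mul, E1, E2, E3.
  change (GI (- s) 0) with (gopp (GI s 0)).
  transitivity (gmul (GI s 0) (gadd (gsq alpha) (gmul gi (gsq beta)))); [ring|].
  rewrite H; ring.
Qed.

Theorem theorem4p18 :
  (forall alpha beta gamma : gint,
      gadd (gadd (gsq alpha) (gmul gi (gsq beta))) (gmul g1pi (gsq gamma)) = g0 ->
      gmul (gmul alpha beta) gamma <> g0 ->
      gcd_in_U alpha beta ->
      exists e1 e2 e3 : gint,
        inU e1 /\ inU e2 /\ inU e3 /\
        let X := gmul e1 alpha in
        let Y := gmul e2 beta in
        let Z := gmul e3 gamma in
        gadd (gsq X) (gmul gi (gsq Y)) = gmul g1pi (gsq Z) /\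
        inOI X /\ inOI Y /\ inOI Z /\
        gcd_in_U X Y /\
        gmul (gmul X Y) Z <> g0)
  /\
  (forall X Y Z : gint,
      gadd (gsq X) (gmul gi (gsq Y)) = gmul g1pi (gsq Z) ->
      gcd_in_U X Y ->
      gmul (gmul X Y) Z <> g0 ->
      gadd (gadd (gsq X) (gmul gi (gsq Y))) (gmul g1pi (gsq (gmul gi Z))) = g0 /\
      gcd_in_U X Y /\
      gmul (gmul X Y) (gmul gi Z) <> g0).
Proof.
  assert (Ui : inU gi) by (right; right; left; reflexivity).
  split.
  - intros alpha beta gamma H N G.
    assert (Oab : inO alpha /\ inO beta).
    { destruct (inO_or_of_gcd _ _ G); rewrite (solution_inO_iff _ _ _ H) in *; tauto. }
    destruct Oab as [Oa Ob].
    pose proof (solution_inO_gamma _ _ _ H Oa Ob) as Oc.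
    destruct (solution_sq_signs _ _ _ H Oa Ob) as [Sb Sc].
    destruct (normalize_unit _ Oa) as (e1 & U1 & E1 & O1),
      (normalize_unit _ Ob) as (e2 & U2 & E2 & O2),
      (normalize_unit _ Oc) as (e3 & U3 & E3 & O3).
    rewrite Sb in E2; rewrite Sc in E3.
    exists e1, e2, e3; do 3 (split; [assumption |]); cbv zeta.
    refine (conj (unit_twisted_solution _ _ _ _ _ _ _ H E1 E2 E3)
              (conj O1 (conj O2 (conj O3 (conj (gcd_in_U_units _ _ _ _ U1 U2 G) _))))).
    replace (gmul (gmul (gmul e1 alpha) (gmul e2 beta)) (gmul e3 gamma))
      with (gmul e1 (gmul e2 (gmul e3 (gmul (gmul alpha beta) gamma)))) by ring.
    do 3 (apply unit_mul_neq0; [assumption |]); exact N.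
  - intros X Y Z H G N; repeat split; [| assumption |].
    + assert (Hi : gsq (gmul gi Z) = gopp (gsq Z))
        by (rewrite gsq_mul; unfold gsq at 1; rewrite gi_sq; ring).
      rewrite Hi, H; ring.
    + replace (gmul (gmul X Y) (gmul gi Z)) with (gmul gi (gmul (gmul X Y) Z)) by ring.
      exact (unit_mul_neq0 _ _ Ui N).
Qed.
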